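(* Let $H$ be a Hilbert space and $\mathrm{Pos}$ the space of positive invertible bounded self-adjoint operators on $H$ with the Thompson metric and base point the identity $I$. Then the function identically $0$ is not a metric functional of $\mathrm{Pos}$, and every metric functional of $\mathrm{Pos}$ is nonconstant, in fact unbounded.
   Context: $\mathrm{Pos}$ is the set of bounded self-adjoint positive definite invertible operators on $H$ with the Thompson metric $d(p,q)=\sup_{v\in H,\|v\|=1}\left|\log\frac{(qv,v)}{(pv,v)}\right|$. Let $\mathrm{Hom}(\mathrm{Pos},\mathbb{R})$ be the set of $1$-Lipschitz functions $\mathrm{Pos}\to\mathbb{R}$ with the topology of pointwise convergence and $h_q(\cdot)=d(\cdot,q)-d(I,q)$ for $q\in\mathrm{Pos}$. Metric functionals are the elements of the closure of $\{h_q:q\in\mathrm{Pos}\}$ in $\mathrm{Hom}(\mathrm{Pos},\mathbb{R})$. *)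

From HB Require Import structures.
From mathcomp Require Import all_boot all_order all_algebra.
From mathcomp Require Import all_classical all_reals.
From mathcomp Require Import exp.
From mathcomp Require Import complex.
Set Implicit Arguments. Unset Strict Implicit. Unset Printing Implicit Defensive.
Import Order.TTheory GRing.Theory Num.Theory.
Local Open Scope ring_scope.
Local Open Scope classical_set_scope.

Section Hilbert.
Variables (R : realType) (V : lmodType R[i]) (ip : V -> V -> R[i]).

Definition ipnorm (v : V) : R := Num.sqrt (complex.Re (ip v v)).

Definition is_hilbert : Prop :=
  [/\ (forall (a : R[i]) (x y z : V), ip (a *: x + y) z = a * ip x z + ip y z),
      (forall x y : V, ip y x = conjc (ip x y)),
      (forall x : V, x != 0 -> (0 < complex.Re (ip x x)) /\ complex.Im (ip x x) = 0),
      ip 0 0 = 0 &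
      (forall u : nat -> V,
         (forall e : R, 0 < e -> exists N : nat, forall m n : nat,
             (N <= m)%N -> (N <= n)%N -> ipnorm (u m - u n) < e) ->
         exists l : V, forall e : R, 0 < e -> exists N : nat, forall n : nat,
             (N <= n)%N -> ipnorm (u n - l) < e)].

Definition bounded_linear (A : V -> V) : Prop :=
  (forall (a : R[i]) (x y : V), A (a *: x + y) = a *: A x + A y) /\
  exists C : R, forall x : V, ipnorm (A x) <= C * ipnorm x.

Definition self_adjoint (A : V -> V) : Prop :=
  forall x y : V, ip (A x) y = ip x (A y).

Definition invertible_op (A : V -> V) : Prop :=
  exists B : V -> V, bounded_linear B /\ cancel A B /\ cancel B A.

Definition Pos (A : V -> V) : Prop :=
  [/\ bounded_linear A, self_adjoint A,
      (forall v : V, v != 0 -> 0 < complex.Re (ip (A v) v)) & invertible_op A].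

Definition thompson (p q : V -> V) : R :=
  sup [set r : R | exists v : V, ipnorm v = 1 /\
        r = `| ln (complex.Re (ip (q v) v) / complex.Re (ip (p v) v)) |].

Definition hfun (q : V -> V) : (V -> V) -> R :=
  fun p => thompson p q - thompson id q.

(* Hom(Pos, R): 1-Lipschitz functions on Pos (a function on Pos is
   represented by a function on all maps V -> V; only values on Pos matter). *)
Definition one_lipschitz (f : (V -> V) -> R) : Prop :=
  forall p q, Pos p -> Pos q -> `| f p - f q | <= thompson p q.

(* f lies in the closure of {h_q : q in Pos} for the topology of pointwise
   convergence on Pos: every basic neighbourhood (finitely many points of
   Pos, a tolerance e > 0) of f contains some h_q. *)
Definition in_ptws_closure_h (f : (V -> V) -> R) : Prop :=
  forall (n : nat) (xs : 'I_n -> (V -> V)) (e : R),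
    (forall i, Pos (xs i)) -> 0 < e ->
    exists q, Pos q /\ forall i, `| hfun q (xs i) - f (xs i) | < e.

(* metric functionals: elements of the closure of {h_q} in Hom(Pos,R) *)
Definition metric_functional (f : (V -> V) -> R) : Prop :=
  one_lipschitz f /\ in_ptws_closure_h f.

End Hilbert.

(* On the unit sphere the scalar operators e^{s}I and e^{-s}I have constant quadratic forms, so
   for every q in Pos and every unit vector v, writing y = log (qv,v),
     d(I,q) + s = sup_v (|y| + s) = sup_v max(|y - s|, |y + s|) <= max(d(e^s I,q), d(e^{-s} I,q)).
   Hence for every q one of h_q(e^s I), h_q(e^{-s} I) is at least s.  A metric functional f is
   approximated at these two points, up to 1, by some h_q, so |f| exceeds s - 1 at one of them:
   f is unbounded, in particular nonconstant and not identically 0.  The suprema involved are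
   finite because the quadratic form of an element of Pos is bounded above and away from 0 on the
   unit sphere (Cauchy-Schwarz for the form, applied to the operator and to its inverse). *)
From HB Require Import structures.
From mathcomp Require Import all_boot all_order all_algebra.
From mathcomp Require Import all_classical all_reals.
From mathcomp Require Import exp.
From mathcomp Require Import complex.
From mathcomp Require Import lra.
From mathcomp Require Import sequences.
Import Order.TTheory GRing.Theory Num.Theory.
Local Open Scope ring_scope.
Local Open Scope complex_scope.
Local Open Scope classical_set_scope.

Lemma ReD (R : realType) (x y : R[i]) : complex.Re (x + y) = complex.Re x + complex.Re y.
Proof. by case: x => a b; case: y. Qed.

Lemma ReMrealc (R : realType) (c : R) (z : R[i]) : complex.Re (c%:C * z) = c * complex.Re z.
Proof. by case: z => a b /=; rewrite mul0r subr0. Qed.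

Lemma Re_conjc (R : realType) (z : R[i]) : complex.Re (conjc z) = complex.Re z.
Proof. by case: z. Qed.

Section InnerProduct.
Context {R : realType} {V : lmodType R[i]} {ip : V -> V -> R[i]}.
Hypothesis hH : is_hilbert ip.

Local Notation form A v := (complex.Re (ip (A v) v)).

Lemma ipDZl a x y z : ip (a *: x + y) z = a * ip x z + ip y z.
Proof. by case: hH. Qed.

Lemma ip0l z : ip 0 z = 0.
Proof. by have := ipDZl (-1) 0 0 z; rewrite scaler0 addr0 mulN1r addNr. Qed.

Lemma ipDZr a x y z : ip z (a *: x + y) = conjc a * ip z x + ip z y.
Proof. by case: hH => _ ipC _ _ _; rewrite ipC ipDZl rmorphD rmorphM /= -!ipC. Qed.

Lemma ip0r z : ip z 0 = 0.
Proof. by case: hH => _ ipC _ _ _; rewrite ipC ip0l conjc0. Qed.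

Lemma ipZl a x z : ip (a *: x) z = a * ip x z.
Proof. by rewrite -[a *: x]addr0 ipDZl ip0l addr0. Qed.

Lemma ipZr a x z : ip z (a *: x) = conjc a * ip z x.
Proof. by rewrite -[a *: x]addr0 ipDZr ip0r addr0. Qed.

Lemma Re_ipC x y : complex.Re (ip y x) = complex.Re (ip x y).
Proof. by case: hH => _ ipC _ _ _; rewrite ipC Re_conjc. Qed.

Lemma Re_ip_gt0 x : x != 0 -> 0 < complex.Re (ip x x).
Proof. by case: hH => _ _ ip_pos _ _ /ip_pos []. Qed.

Lemma Re_ip_ge0 x : 0 <= complex.Re (ip x x).
Proof.
have [->|/Re_ip_gt0/ltW //] := eqVneq x 0.
by case: hH => _ _ _ -> _.
Qed.

Lemma ipnorm_ge0 x : 0 <= ipnorm ip x.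
Proof. exact: sqrtr_ge0. Qed.

Lemma ipnorm_sqr x : ipnorm ip x ^+ 2 = complex.Re (ip x x).
Proof. by rewrite sqr_sqrtr // Re_ip_ge0. Qed.

Lemma ipnormZ (c : R) x : 0 <= c -> ipnorm ip (c%:C *: x) = c * ipnorm ip x.
Proof.
move=> c_ge0; rewrite /ipnorm ipZl ipZr conjc_real mulrA -rmorphM /= ReMrealc.
by rewrite sqrtrM ?mulr_ge0 // -expr2 sqrtr_sqr ger0_norm.
Qed.

Lemma ipnorm1_neq0 {v} : ipnorm ip v = 1 -> v != 0.
Proof.
apply: contra_eqN => /eqP ->.
by case: hH => _ _ _ ip00 _; rewrite /ipnorm ip00 /= sqrtr0 eq_sym oner_eq0.
Qed.

Lemma Re_ip_unit v : ipnorm ip v = 1 -> complex.Re (ip v v) = 1.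
Proof. by move=> v1; rewrite -ipnorm_sqr v1 expr1n. Qed.

Lemma exists_unit_vector : (exists v : V, v != 0) -> exists u, ipnorm ip u = 1.
Proof.
case=> v /Re_ip_gt0; rewrite -sqrtr_gt0 => v_gt0.
exists ((ipnorm ip v)^-1%:C *: v).
by rewrite ipnormZ ?mulVf ?gt_eqF // invr_ge0 ltW.
Qed.

Definition linear_op (A : V -> V) :=
  forall (a : R[i]) (x y : V), A (a *: x + y) = a *: A x + A y.

Lemma linear_op0 A : linear_op A -> A 0 = 0.
Proof. by move=> /(_ (-1) 0 0); rewrite scaler0 addr0 scaleN1r addNr. Qed.

(* The discriminant of the nonnegative quadratic t |-> form A (x - t y), at t = Re(Ax,y)/form A y. *)
Lemma cauchy_schwarz_form {A} : linear_op A -> self_adjoint ip A ->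
  (forall x, 0 <= form A x) ->
  forall x y, 0 < form A y -> complex.Re (ip (A x) y) ^+ 2 <= form A x * form A y.
Proof.
move=> A_lin A_sa A_ge0 x y Ay_gt0.
set a := form A x; set b := form A y; set r := complex.Re (ip (A x) y).
set t := r / b.
have tb : t * b = r by rewrite /t mulfVK // gt_eqF.
have : 0 <= a - 2 * t * r + t ^+ 2 * b.
  have := A_ge0 ((- t)%:C *: y + x).
  rewrite A_lin ipDZl !ipDZr conjc_real !ReD !ReMrealc !ReD !ReMrealc.
  have -> : complex.Re (ip (A y) x) = r by rewrite A_sa Re_ipC.
  by rewrite -/a -/b -/r; nra.
nra.
Qed.

Lemma Re_ip_le_ipnorm x {y} : ipnorm ip y = 1 -> complex.Re (ip x y) <= ipnorm ip x.
Proof.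
move=> y1.
have := @cauchy_schwarz_form id (fun _ _ _ => erefl) (fun _ _ => erefl) Re_ip_ge0 x y.
rewrite /= Re_ip_unit // mulr1 -ipnorm_sqr => /(_ ltr01) cs.
have := ipnorm_ge0 x; nra.
Qed.

Lemma Pos_form_ge0 {q} : Pos ip q -> forall x, 0 <= form q x.
Proof.
move=> [[q_lin _] _ q_gt0 _] x.
have [->|/q_gt0/ltW //] := eqVneq x 0.
by rewrite linear_op0 // ip0l.
Qed.

Lemma Pos_form_ub {q} : Pos ip q -> exists C : R, forall v, ipnorm ip v = 1 -> form q v <= C.
Proof.
move=> [[_ [C qC]] _ _ _].
exists C => v v1.
by apply: le_trans (Re_ip_le_ipnorm _ v1) _; have := qC v; rewrite v1 mulr1.
Qed.

(* With w = q^-1 v, Cauchy-Schwarz gives 1 = Re(qv,w)^2 <= form q v * form q w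
   and form q w = Re(w,v) <= |w| <= |q^-1|. *)
Lemma Pos_form_lb {q} : Pos ip q -> exists2 d : R, 0 < d & forall v, ipnorm ip v = 1 -> d <= form q v.
Proof.
move=> q_pos; case: (q_pos) => [[q_lin _] q_sa q_gt0 [B [[_ [CB BC]] [_ Bq]]]].
exists (`|CB| + 1)^-1; first by rewrite invr_gt0 ltr_pwDr.
move=> v v1; set w := B v.
have qw : q w = v by rewrite /w Bq.
have w_neq0 : w != 0.
  by apply: contra_neq _ (ipnorm1_neq0 v1) => w0; rewrite -qw w0 linear_op0.
have qw_gt0 := q_gt0 w w_neq0.
have cs := cauchy_schwarz_form q_lin q_sa (Pos_form_ge0 q_pos) v w qw_gt0.
rewrite q_sa qw Re_ip_unit // expr1n in cs.
have vw_le : complex.Re (ip v w) <= `|CB|.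
  rewrite Re_ipC (le_trans (Re_ip_le_ipnorm _ v1)) //.
  by rewrite (le_trans (BC v)) // v1 mulr1 ler_norm.
have qv_ge0 := Pos_form_ge0 q_pos v.
rewrite -[_^-1]mulr1 ler_pdivrMl ?ltr_pwDr //.
have := normr_ge0 CB; nra.
Qed.

Definition scalar_op (c : R) : V -> V := fun v => c%:C *: v.

Lemma form_scalar_op c v : form (scalar_op c) v = c * complex.Re (ip v v).
Proof. by rewrite ipZl ReMrealc. Qed.

Lemma scalar_opM c d x : scalar_op c (scalar_op d x) = scalar_op (c * d) x.
Proof. by rewrite /scalar_op scalerA -rmorphM. Qed.

Lemma scalar_op1 x : scalar_op 1 x = x.
Proof. by rewrite /scalar_op rmorph1 scale1r. Qed.

Lemma bounded_linear_scalar_op c : 0 <= c -> bounded_linear ip (scalar_op c).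
Proof.
move=> c_ge0; split; first by move=> a x y; rewrite /scalar_op scalerDr !scalerA mulrC.
by exists c => x; rewrite ipnormZ.
Qed.

Lemma Pos_scalar_op {c} : 0 < c -> Pos ip (scalar_op c).
Proof.
move=> c_gt0; split.
- exact/bounded_linear_scalar_op/ltW.
- by move=> x y; rewrite /scalar_op ipZl ipZr conjc_real.
- by move=> v /Re_ip_gt0 v_gt0; rewrite form_scalar_op mulr_gt0.
- exists (scalar_op c^-1); split; first by apply: bounded_linear_scalar_op; rewrite invr_ge0 ltW.
  by split=> x; rewrite scalar_opM ?mulVf ?mulfV ?gt_eqF // scalar_op1.
Qed.

Section Thompson.
Hypothesis V_nontrivial : exists v : V, v != 0.

Context {p q : V -> V} {c : R}.
Hypotheses (q_pos : Pos ip q) (c_gt0 : 0 < c).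
Hypothesis p_form : forall v, ipnorm ip v = 1 -> form p v = c.

Let dist_set := [set r : R | exists v, ipnorm ip v = 1 /\ r = `|ln (form q v) - ln c|].

Lemma thompson_const_formE : thompson ip p q = sup dist_set.
Proof.
have [d d_gt0 d_le] := Pos_form_lb q_pos.
congr sup; apply/seteqP; split=> r [v [v1 ->]]; exists v; split => //;
  by rewrite p_form // lnM ?lnV ?posrE ?invr_gt0 // (lt_le_trans d_gt0) ?d_le.
Qed.

Lemma dist_set_neq0 : dist_set !=set0.
Proof. by have [u u1] := exists_unit_vector V_nontrivial; eexists; exists u. Qed.

Lemma ln_form_dist_le_thompson v :
  ipnorm ip v = 1 -> `|ln (form q v) - ln c| <= thompson ip p q.
Proof.
move=> v1; rewrite thompson_const_formE.
have [d d_gt0 d_le] := Pos_form_lb q_pos; have [C C_ge] := Pos_form_ub q_pos.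
apply: sup_upper_bound; last by exists v.
split; first exact: dist_set_neq0.
exists (`|ln d| + `|ln C| + `|ln c|) => _ [w [w1 ->]].
have d_le_w := d_le w w1; have w_le_C := C_ge w w1.
have w_gt0 := lt_le_trans d_gt0 d_le_w.
have : ln d <= ln (form q w) <= ln C.
  by rewrite !ler_ln ?posrE ?d_le_w ?w_le_C // (lt_le_trans w_gt0).
move: (ln (form q w)) => y /andP[dy yC].
apply: le_trans (ler_normB _ _) _; rewrite lerD2r.
have := ler_norm (ln C); have := ler_norm (- ln d); rewrite normrN.
have := normr_ge0 (ln C); have := normr_ge0 (ln d).
have [y_ge0|y_lt0] := lerP 0 y; [rewrite (ger0_norm y_ge0) | rewrite (ltr0_norm y_lt0)]; lra.
Qed.

Lemma thompson_le_of_ln_form_dist M :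
  (forall v, ipnorm ip v = 1 -> `|ln (form q v) - ln c| <= M) -> thompson ip p q <= M.
Proof.
move=> bound; rewrite thompson_const_formE.
by apply: ge_sup; [exact: dist_set_neq0 | move=> _ [v [v1 ->]]; exact: bound].
Qed.

End Thompson.

Lemma thompson_exp_scalar_op_max {q : V -> V} (s : R) :
  (exists v : V, v != 0) -> Pos ip q ->
  thompson ip id q + s <=
  Num.max (thompson ip (scalar_op (expR s)) q) (thompson ip (scalar_op (expR (- s))) q).
Proof.
move=> V_nt q_pos.
have exp_form t v : ipnorm ip v = 1 -> form (scalar_op (expR t)) v = expR t.
  by move=> v1; rewrite form_scalar_op Re_ip_unit ?mulr1.
rewrite -lerBrDr; apply: (thompson_le_of_ln_form_dist V_nt q_pos ltr01 Re_ip_unit) => v v1.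
have := ln_form_dist_le_thompson V_nt q_pos (expR_gt0 s) (exp_form s) v v1.
have := ln_form_dist_le_thompson V_nt q_pos (expR_gt0 (- s)) (exp_form (- s)) v v1.
rewrite !expRK ln1 subr0 opprK.
move: (ln (form q v)) => y y_plus y_minus.
rewrite lerBrDr le_max; have [y_ge0|y_lt0] := lerP 0 y.
- rewrite ger0_norm //; apply/orP; right.
  by apply: le_trans y_plus; rewrite (le_trans _ (ler_norm _)).
- rewrite ltr0_norm //; apply/orP; left.
  apply: le_trans y_minus; rewrite -normrN (le_trans _ (ler_norm _)) //; lra.
Qed.

Lemma ptws_closure_h_unbounded f : (exists v : V, v != 0) -> in_ptws_closure_h ip f ->
  forall M : R, exists p, Pos ip p /\ M < `|f p|.
Proof.
move=> V_nt f_cl M; set s := M + 1.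
pose xs (i : 'I_2) := scalar_op (expR (if i == ord0 then s else - s)).
have xs_pos i : Pos ip (xs i) by exact/Pos_scalar_op/expR_gt0.
have [q [q_pos q_approx]] := f_cl 2%N xs 1 xs_pos ltr01.
have f_big i : thompson ip id q + s <= thompson ip (xs i) q -> M < `|f (xs i)|.
  move=> T_le; have := q_approx i; rewrite /hfun ltr_distlC => /andP[f_gt _].
  by apply: lt_le_trans (ler_norm _); rewrite /s in T_le; lra.
have := thompson_exp_scalar_op_max s V_nt q_pos; rewrite le_max => /orP[].
- by move=> /(f_big ord0); exists (xs ord0).
- by move=> /(f_big ord_max); exists (xs ord_max).
Qed.

End InnerProduct.

Theorem proposition22 (R : realType) (V : lmodType R[i]) (ip : V -> V -> R[i])
  (hH : is_hilbert ip) (hnt : exists v : V, v != 0) :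
  ~ metric_functional ip (fun _ => 0 : R) /\
  (forall f : (V -> V) -> R, metric_functional ip f ->
     (exists p q, Pos ip p /\ Pos ip q /\ f p <> f q) /\
     (forall M : R, exists p, Pos ip p /\ M < `| f p |)).
Proof.
have unbounded := ptws_closure_h_unbounded hH _ hnt.
split.
  by case=> _ /unbounded/(_ 0) [p [_]]; rewrite normr0 ltxx.
move=> f [_ /unbounded f_unbounded]; split => //.
have [p [p_pos f_gt]] := f_unbounded `|f (scalar_op 1)|.
exists p, (scalar_op 1); split => //; split; first exact: (Pos_scalar_op hH ltr01).
by move=> f_eq; move: f_gt; rewrite f_eq ltxx.
Qed.
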